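(* Let $\mu,\nu\in\mathbb{R}$ and $\tau\in\mathbb{R}\setminus\{0\}$. On smooth functions $\Phi(x,t)$ on $\mathbb{R}^2$ define the operators $$H=\partial_t,\quad P=\partial_x,\quad K=-\nu t\,e^{-\tau\partial_t}\partial_x-\mu x\,\frac{e^{\tau\partial_t}-1}{\tau},\quad D=-x\partial_x-t\,\frac{1-e^{-\tau\partial_t}}{\tau},$$ $$C_1=(\mu x^2+\nu t^2e^{-\tau\partial_t})\frac{e^{\tau\partial_t}-1}{\tau}+2\nu xt\,\partial_x+\tau\nu(x\partial_x+x^2\partial_x^2),$$ $$C_2=-(\mu x^2+\nu t^2e^{-2\tau\partial_t})\partial_x-2\mu xt\,\frac{1-e^{-\tau\partial_t}}{\tau}+\tau\nu t\,e^{-2\tau\partial_t}\partial_x,$$ where $e^{a\partial_t}$ is the shift $\Phi(x,t)\mapsto\Phi(x,t+a)$ and $x,t$ denote multiplication operators. Then these operators satisfy the relations $[K,H]=\nu e^{-\tau H}P$, $[K,P]=\mu\frac{e^{\tau H}-1}{\tau}$, $[H,P]=0$, $[K,D]=0$, $[D,H]=\frac{1-e^{-\tau H}}{\tau}$, $[D,C_1]=-C_1+\tau\nu D^2$, $[H,C_1]=-2\nu D$, $[D,P]=P$, $[D,C_2]=-C_2$, $[P,C_2]=2\mu D$, $[K,C_1]=\nu C_2$, $[K,C_2]=\mu C_1-\tau\mu\nu D^2$, $[H,C_2]=e^{-\tau H}K+Ke^{-\tau H}$, $[P,C_1]=-2K-\tau\nu(DP+PD)$, $[C_1,C_2]=-\tau\nu(DC_2+C_2D)$.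 Moreover, with $$E_\tau=\nu\,\partial_x^2-\mu\Big(\frac{e^{\tau\partial_t}-1}{\tau}\Big)^2,$$ one has $[E_\tau,X]=0$ for $X\in\{K,H,P\}$, $[E_\tau,D]=-2E_\tau$, $[E_\tau,C_1]=4\nu(t+\tau+\tau x\partial_x)E_\tau$ and $[E_\tau,C_2]=-4\mu x\,E_\tau$. In particular each of $H,P,K,D,C_1,C_2$ maps solutions of $E_\tau\Phi=0$ to solutions of $E_\tau\Phi=0$. *)

From Stdlib Require Import Reals.
From Coquelicot Require Import Coquelicot.
Open Scope R_scope.

(* Functions Phi(x,t) on R^2, first argument x, second argument t. *)
Definition fn := R -> R -> R.

Definition dx (f : fn) : fn := fun x t => Derive (fun y => f y t) x.
Definition dt (f : fn) : fn := fun x t => Derive (fun s => f x s) t.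

Definition cont2 (f : fn) : Prop :=
  forall x t, continuous (fun p : R * R => f (fst p) (snd p)) (x, t).

Fixpoint Ck (k : nat) (f : fn) : Prop :=
  match k with
  | O => cont2 f
  | S k' => cont2 f
            /\ (forall x t, ex_derive (fun y => f y t) x)
            /\ (forall x t, ex_derive (fun s => f x s) t)
            /\ Ck k' (dx f) /\ Ck k' (dt f)
  end.

Definition smooth (f : fn) : Prop := forall k, Ck k f.

Definition shift (a : R) (f : fn) : fn := fun x t => f x (t + a).
Definition zerof : fn := fun _ _ => 0.

Section Ops.
Variables (mu nu tau : R).

Definition fwd_diff (f : fn) : fn := fun x t => (f x (t + tau) - f x t) / tau.
Definition bwd_diff (f : fn) : fn := fun x t => (f x t - f x (t - tau)) / tau.

Definition opH (f : fn) : fn := dt f.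
Definition opP (f : fn) : fn := dx f.
Definition opK (f : fn) : fn := fun x t =>
  - nu * t * shift (- tau) (dx f) x t - mu * x * fwd_diff f x t.
Definition opD (f : fn) : fn := fun x t =>
  - x * dx f x t - t * bwd_diff f x t.
Definition opC1 (f : fn) : fn := fun x t =>
  mu * x ^ 2 * fwd_diff f x t + nu * t ^ 2 * shift (- tau) (fwd_diff f) x t
  + 2 * nu * x * t * dx f x t
  + tau * nu * (x * dx f x t + x ^ 2 * dx (dx f) x t).
Definition opC2 (f : fn) : fn := fun x t =>
  - (mu * x ^ 2 * dx f x t + nu * t ^ 2 * shift (- (2 * tau)) (dx f) x t)
  - 2 * mu * x * t * bwd_diff f x t
  + tau * nu * t * shift (- (2 * tau)) (dx f) x t.
Definition opE (f : fn) : fn := fun x t =>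
  nu * dx (dx f) x t - mu * fwd_diff (fwd_diff f) x t.
End Ops.

Definition comm (A B : fn -> fn) (f : fn) : fn := fun x t => A (B f) x t - B (A f) x t.
Definition addf (f g : fn) : fn := fun x t => f x t + g x t.
Definition scalf (c : R) (f : fn) : fn := fun x t => c * f x t.

(* All the operators are built from multiplication by [x] and [t], the partial
   derivatives and the time shifts [e^{a d_t}].  On smooth functions the only
   non-trivial commutation rules between these are [[d_x, x] = 1], [[d_t, t] = 1],
   [e^{a d_t} t = (t + a) e^{a d_t}] and Schwarz's [d_t d_x = d_x d_t].  Hence each
   relation becomes, once the derivatives of the compound expressions are computed,
   the mixed partials put in one order and the shifted time arguments written as
   [t + k tau], a pointwise identity of rational expressions in [tau <> 0].
   Every commutator [[E, X] Phi] vanishes when [E Phi] does, and [X 0 = 0], so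
   [E (X Phi) = [E, X] Phi + X (E Phi)] shows that [X] preserves solutions of [E Phi = 0]. *)
From Stdlib Require Import Reals FunctionalExtensionality.
From Coquelicot Require Import Coquelicot.
Open Scope R_scope.

Lemma fn_ext (f g : fn) : (forall x t, f x t = g x t) -> f = g.
Proof.
  intros Efg; apply functional_extensionality; intro x.
  apply functional_extensionality; intro t; apply Efg.
Qed.

Lemma smooth_dx (f : fn) : smooth f -> smooth (dx f).
Proof. intros Hf k; exact (proj1 (proj2 (proj2 (proj2 (Hf (S k)))))). Qed.

Lemma smooth_dt (f : fn) : smooth f -> smooth (dt f).
Proof. intros Hf k; exact (proj2 (proj2 (proj2 (proj2 (Hf (S k)))))). Qed.

Lemma smooth_ex_derive_x (f : fn) x t : smooth f -> ex_derive (fun y => f y t) x.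
Proof. intros Hf; exact (proj1 (proj2 (Hf 1%nat)) x t). Qed.

Lemma smooth_ex_derive_t (f : fn) x t : smooth f -> ex_derive (fun s => f x s) t.
Proof. intros Hf; exact (proj1 (proj2 (proj2 (Hf 1%nat))) x t). Qed.

Lemma dt_dx_comm (f : fn) : Ck 2 f -> dt (dx f) = dx (dt f).
Proof.
  intros (_ & exf_x & exf_t & (_ & _ & exdxf_t & _ & cont_dtdx)
                            & (_ & exdtf_x & _ & cont_dxdt & _)).
  apply fn_ext; intros x t; symmetry; apply Schwarz.
  - exists (mkposreal 1 Rlt_0_1); intros u v _ _; repeat split;
      [apply exf_x | apply exf_t | apply exdtf_x | apply exdxf_t].
  - apply continuity_2d_pt_filterlim, cont_dxdt.
  - apply continuity_2d_pt_filterlim, cont_dtdx.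
Qed.

Lemma dx_is_derive (g d : fn) :
  (forall x t, is_derive (fun y => g y t) x (d x t)) -> dx g = d.
Proof. intros Hd; apply fn_ext; intros x t; apply is_derive_unique, Hd. Qed.

Lemma dt_is_derive (g d : fn) :
  (forall x t, is_derive (fun s => g x s) t (d x t)) -> dt g = d.
Proof. intros Hd; apply fn_ext; intros x t; apply is_derive_unique, Hd. Qed.

Lemma dx_zerof : dx zerof = zerof.
Proof. apply fn_ext; intros x t; unfold dx, zerof; apply Derive_const. Qed.

Lemma dt_zerof : dt zerof = zerof.
Proof. apply fn_ext; intros x t; unfold dt, zerof; apply Derive_const. Qed.

(* The leading [idtac] keeps the failure of [is_var] catchable by [assert_fails]. *)
Ltac is_partial g :=
  idtac;
  lazymatch g with
  | dx ?h => is_partial h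
  | dt ?h => is_partial h
  | _ => is_var g
  end.

Ltac prove_smooth := repeat (apply smooth_dx || apply smooth_dt); assumption.

Ltac prove_ex_derive :=
  repeat match goal with
  | |- _ /\ _ => split
  | |- True => exact I
  | |- ex_derive (fun y => ?g y _) _ => apply smooth_ex_derive_x; prove_smooth
  | |- ex_derive (fun s => ?g _ s) _ => apply smooth_ex_derive_t; prove_smooth
  end.

Ltac fold_partials :=
  repeat match goal with
  | |- context [Derive (fun y => ?g y ?t) ?x] =>
      change (Derive (fun y => g y t) x) with (dx g x t)
  | |- context [Derive (fun s => ?g ?x s) ?t] =>
      change (Derive (fun s => g x s) t) with (dt g x t)
  end.

Ltac only_partials_inside G :=
  assert_fails (idtac; match G with
                | context [dx ?h] => assert_fails (is_partial h)
                | context [dt ?h] => assert_fails (is_partial h)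
                end).

(* Innermost first: [auto_derive] can only treat [dx h] and [dt h] as opaque
   differentiable functions when [h] is a partial derivative of a variable. *)
Ltac explicit_partials :=
  repeat match goal with
  | |- context [dx ?G] =>
      assert_fails (is_partial G); only_partials_inside G;
      erewrite (dx_is_derive G);
      [| intros ? ?; auto_derive; [prove_ex_derive | fold_partials; reflexivity]]
  | |- context [dt ?G] =>
      assert_fails (is_partial G); only_partials_inside G;
      erewrite (dt_is_derive G);
      [| intros ? ?; auto_derive; [prove_ex_derive | fold_partials; reflexivity]]
  end.

Ltac order_mixed_partials :=
  repeat match goal with
  | |- context [dt (dx ?g)] =>
      let Hg := fresh in
      assert (Hg : smooth g) by prove_smooth;
      rewrite (dt_dx_comm g (Hg 2%nat)); clear Hg
  end.

(* [f x (t + tau - tau)] and [f x t] are different atoms for [field], so every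
   time argument is first rewritten to one of these forms. *)
Ltac for_each_time_form t tau tac :=
  first [ tac t | tac (t + tau) | tac (t + 2 * tau)
        | tac (t - tau) | tac (t - 2 * tau) | tac (t - 3 * tau) ].

Ltac normalize_times t tau :=
  repeat match goal with
  | |- context [?g _ ?s] =>
      is_partial g;
      assert_fails (for_each_time_form t tau ltac:(fun c => constr_eq s c));
      for_each_time_form t tau ltac:(fun c => replace s with c by ring)
  end.

Ltac operator_identity tau_neq0 :=
  let tau := lazymatch type of tau_neq0 with ?tau <> 0 => tau end in
  unfold comm, addf, scalf, zerof, opH, opP, opK, opD, opC1, opC2, opE,
    shift, fwd_diff, bwd_diff;
  explicit_partials; order_mixed_partials;
  let x := fresh "x" in let t := fresh "t" in
  apply fn_ext; intros x t; cbv beta; normalize_times t tau;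
  field; exact tau_neq0.

Section Relations.
Variables (mu nu tau : R) (f : fn).
Hypotheses (tau_neq0 : tau <> 0) (smooth_f : smooth f).

Lemma comm_K_H : comm (opK mu nu tau) opH f = scalf nu (shift (- tau) (opP f)).
Proof. operator_identity tau_neq0. Qed.

Lemma comm_K_P : comm (opK mu nu tau) opP f = scalf mu (fwd_diff tau f).
Proof. operator_identity tau_neq0. Qed.

Lemma comm_H_P : comm opH opP f = zerof.
Proof. operator_identity tau_neq0. Qed.

Lemma comm_K_D : comm (opK mu nu tau) (opD tau) f = zerof.
Proof. operator_identity tau_neq0. Qed.

Lemma comm_D_H : comm (opD tau) opH f = bwd_diff tau f.
Proof. operator_identity tau_neq0. Qed.

Lemma comm_D_C1 :
  comm (opD tau) (opC1 mu nu tau) f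
  = addf (scalf (-1) (opC1 mu nu tau f)) (scalf (tau * nu) (opD tau (opD tau f))).
Proof. operator_identity tau_neq0. Qed.

Lemma comm_H_C1 : comm opH (opC1 mu nu tau) f = scalf (-2 * nu) (opD tau f).
Proof. operator_identity tau_neq0. Qed.

Lemma comm_D_P : comm (opD tau) opP f = opP f.
Proof. operator_identity tau_neq0. Qed.

Lemma comm_D_C2 : comm (opD tau) (opC2 mu nu tau) f = scalf (-1) (opC2 mu nu tau f).
Proof. operator_identity tau_neq0. Qed.

Lemma comm_P_C2 : comm opP (opC2 mu nu tau) f = scalf (2 * mu) (opD tau f).
Proof. operator_identity tau_neq0. Qed.

Lemma comm_K_C1 : comm (opK mu nu tau) (opC1 mu nu tau) f = scalf nu (opC2 mu nu tau f).
Proof. operator_identity tau_neq0. Qed.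

Lemma comm_K_C2 :
  comm (opK mu nu tau) (opC2 mu nu tau) f
  = addf (scalf mu (opC1 mu nu tau f))
         (scalf (- (tau * mu * nu)) (opD tau (opD tau f))).
Proof. operator_identity tau_neq0. Qed.

Lemma comm_H_C2 :
  comm opH (opC2 mu nu tau) f
  = addf (shift (- tau) (opK mu nu tau f)) (opK mu nu tau (shift (- tau) f)).
Proof. operator_identity tau_neq0. Qed.

Lemma comm_P_C1 :
  comm opP (opC1 mu nu tau) f
  = addf (scalf (-2) (opK mu nu tau f))
         (scalf (- (tau * nu)) (addf (opD tau (opP f)) (opP (opD tau f)))).
Proof. operator_identity tau_neq0. Qed.

Lemma comm_C1_C2 :
  comm (opC1 mu nu tau) (opC2 mu nu tau) f
  = scalf (- (tau * nu)) (addf (opD tau (opC2 mu nu tau f)) (opC2 mu nu tau (opD tau f))).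
Proof. operator_identity tau_neq0. Qed.

Lemma comm_E_K : comm (opE mu nu tau) (opK mu nu tau) f = zerof.
Proof. operator_identity tau_neq0. Qed.

Lemma comm_E_H : comm (opE mu nu tau) opH f = zerof.
Proof. operator_identity tau_neq0. Qed.

Lemma comm_E_P : comm (opE mu nu tau) opP f = zerof.
Proof. operator_identity tau_neq0. Qed.

Lemma comm_E_D : comm (opE mu nu tau) (opD tau) f = scalf (-2) (opE mu nu tau f).
Proof. operator_identity tau_neq0. Qed.

Lemma comm_E_C1 :
  comm (opE mu nu tau) (opC1 mu nu tau) f
  = (fun x t => 4 * nu * ((t + tau) * opE mu nu tau f x t
                          + tau * x * dx (opE mu nu tau f) x t)).
Proof. operator_identity tau_neq0. Qed.

Lemma comm_E_C2 :
  comm (opE mu nu tau) (opC2 mu nu tau) f = (fun x t => -4 * mu * x * opE mu nu tau f x t).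
Proof. operator_identity tau_neq0. Qed.

End Relations.

Lemma comm_kernel_stable (E X : fn -> fn) (f : fn) :
  X zerof = zerof -> E f = zerof -> comm E X f = zerof -> E (X f) = zerof.
Proof.
  intros X0 Ef EXf; apply fn_ext; intros x t.
  transitivity (comm E X f x t + X (E f) x t); [unfold comm; ring |].
  rewrite EXf, Ef, X0; unfold zerof; ring.
Qed.

Ltac operator_maps_zero :=
  unfold opH, opP, opK, opD, opC1, opC2, shift, fwd_diff, bwd_diff;
  rewrite ?dx_zerof, ?dt_zerof;
  apply fn_ext; intros ? ?; unfold zerof, Rdiv; ring.

Lemma solutions_stable (mu nu tau : R) (f : fn) :
  tau <> 0 -> smooth f -> opE mu nu tau f = zerof ->
  opE mu nu tau (opH f) = zerof /\ opE mu nu tau (opP f) = zerof /\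
  opE mu nu tau (opK mu nu tau f) = zerof /\ opE mu nu tau (opD tau f) = zerof /\
  opE mu nu tau (opC1 mu nu tau f) = zerof /\ opE mu nu tau (opC2 mu nu tau f) = zerof.
Proof.
  intros tau_neq0 smooth_f Ef.
  repeat split; (apply comm_kernel_stable; [operator_maps_zero | exact Ef |]).
  - apply comm_E_H; assumption.
  - apply comm_E_P; assumption.
  - apply comm_E_K; assumption.
  - rewrite comm_E_D, Ef by assumption; apply fn_ext; intros x t; unfold scalf, zerof; ring.
  - rewrite comm_E_C1, Ef, dx_zerof by assumption; apply fn_ext; intros x t; unfold zerof; ring.
  - rewrite comm_E_C2, Ef by assumption; apply fn_ext; intros x t; unfold zerof; ring.
Qed.

Theorem mainTheorem2 (mu nu tau : R) (Htau : tau <> 0) (Phi : fn) (HPhi : smooth Phi) :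
  let H := opH in
  let P := opP in
  let K := opK mu nu tau in
  let D := opD tau in
  let C1 := opC1 mu nu tau in
  let C2 := opC2 mu nu tau in
  let E := opE mu nu tau in
  let emH := shift (- tau) in
  (* relations of the algebra *)
  comm K H Phi = scalf nu (emH (P Phi)) /\
  comm K P Phi = scalf mu (fwd_diff tau Phi) /\
  comm H P Phi = zerof /\
  comm K D Phi = zerof /\
  comm D H Phi = bwd_diff tau Phi /\
  comm D C1 Phi = addf (scalf (-1) (C1 Phi)) (scalf (tau * nu) (D (D Phi))) /\
  comm H C1 Phi = scalf (-2 * nu) (D Phi) /\
  comm D P Phi = P Phi /\
  comm D C2 Phi = scalf (-1) (C2 Phi) /\
  comm P C2 Phi = scalf (2 * mu) (D Phi) /\
  comm K C1 Phi = scalf nu (C2 Phi) /\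
  comm K C2 Phi = addf (scalf mu (C1 Phi)) (scalf (- (tau * mu * nu)) (D (D Phi))) /\
  comm H C2 Phi = addf (emH (K Phi)) (K (emH Phi)) /\
  comm P C1 Phi = addf (scalf (-2) (K Phi))
                       (scalf (- (tau * nu)) (addf (D (P Phi)) (P (D Phi)))) /\
  comm C1 C2 Phi = scalf (- (tau * nu)) (addf (D (C2 Phi)) (C2 (D Phi))) /\
  (* relations with E_tau *)
  comm E K Phi = zerof /\
  comm E H Phi = zerof /\
  comm E P Phi = zerof /\
  comm E D Phi = scalf (-2) (E Phi) /\
  comm E C1 Phi = (fun x t => 4 * nu * ((t + tau) * E Phi x t + tau * x * dx (E Phi) x t)) /\
  comm E C2 Phi = (fun x t => -4 * mu * x * E Phi x t) /\
  (* symmetries of E_tau Phi = 0 *)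
  (E Phi = zerof ->
     E (H Phi) = zerof /\ E (P Phi) = zerof /\ E (K Phi) = zerof /\
     E (D Phi) = zerof /\ E (C1 Phi) = zerof /\ E (C2 Phi) = zerof).
Proof.
  cbv zeta.
  repeat apply conj;
    [ apply comm_K_H | apply comm_K_P | apply comm_H_P | apply comm_K_D
    | apply comm_D_H | apply comm_D_C1 | apply comm_H_C1 | apply comm_D_P
    | apply comm_D_C2 | apply comm_P_C2 | apply comm_K_C1 | apply comm_K_C2
    | apply comm_H_C2 | apply comm_P_C1 | apply comm_C1_C2
    | apply comm_E_K | apply comm_E_H | apply comm_E_P | apply comm_E_D
    | apply comm_E_C1 | apply comm_E_C2 | intro; apply solutions_stable ];
    assumption.
Qed.
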